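(* For $i\in\{0,1\}$ and $m\ge0$, $$\Psi^{-1}\big(P_{\Lambda_0}^{\Lambda_i}(w_m)\big)=\{(\mu_1,\dots,\mu_l)\in\mathcal{Y}(0):\ \text{the parts }\mu_k\text{ are distinct and all odd (if }i=0\text{) resp. all even (if }i=1\text{)},\ \mu_1\le m\},$$ where $P_{\Lambda_0}^{\Lambda_i}(w_m)$ is the set of $\Lambda_i$-dominant LS paths of shape $\Lambda_0$ whose initial direction is $\le w_m$ in Bruhat order.
   Context: Notation as follows. $\widehat{\mathfrak{sl}_2}$: affine Kac–Moody algebra, simple roots $\alpha_0,\alpha_1$, fundamental weights $\Lambda_0,\Lambda_1$, Weyl group $W=\langle s_0,s_1\rangle$; $s_j:=s_{j\bmod 2}$ and $w_k:=s_{k-1}\cdots s_1s_0$ ($w_0=1$); these are the minimal coset representatives of $W/W_{\Lambda_0}$ and $w_m>w_n$ in Bruhat order iff $m>n$. An LS path of shape $\Lambda_0$ is written $\pi=(\sigma_1>\dots>\sigma_r;\,0=a_0<a_1<\dots<a_r=1)$; $\sigma_1$ is its initial direction; its turning points are $\sum_{k\le j}(a_k-a_{k-1})\sigma_k\Lambda_0$ for $0\le j\le r$; $\pi$ is $\lambda$-dominant if $\lambda+\gamma$ is dominant for every turning point $\gamma$. $\mathcal{Y}(0)$ is the set of partitions with distinct nonzero parts (regular charged partitions of charge $0$). For $b=(\mu_1>\dots>\mu_l>0)$ put $m=\mu_1$, $n=l$, $\tilde b=(\mu_1-n,\mu_2-(n-1),\dots,\mu_l-1)$, and let the conjugate of $\tilde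 b$ be $(i_{n+1}\ge\dots\ge i_m)$. Then $\Psi(b)=(w_m>w_{m-1}>\dots>w_n;\ 0<\tfrac{i_m}{m}<\dots<\tfrac{i_{n+1}}{n+1}<1)$, and $\Psi(\emptyset)=(1;0<1)$. *)

From mathcomp Require Import all_boot all_order all_algebra.
Set Implicit Arguments. Unset Strict Implicit. Unset Printing Implicit Defensive.
Import Order.TTheory GRing.Theory Num.Theory.
Local Open Scope ring_scope.

(* A (rational) weight c0*Lambda_0 + c1*Lambda_1 + d*delta is the triple
   ((c0, c1), d). *)
Definition weight := ((rat * rat) * rat)%type.

Definition wadd (x y : weight) : weight :=
  ((x.1.1 + y.1.1, x.1.2 + y.1.2), x.2 + y.2).
Definition wscale (a : rat) (x : weight) : weight :=
  ((a * x.1.1, a * x.1.2), a * x.2).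
Definition wzero : weight := ((0, 0), 0).

Definition Lam0 : weight := ((1, 0), 0).
Definition Lam1 : weight := ((0, 1), 0).
Definition Lam (i : nat) : weight := if i == 0%N then Lam0 else Lam1.

(* simple roots alpha_0 = 2 Lambda_0 - 2 Lambda_1 + delta,
   alpha_1 = 2 Lambda_1 - 2 Lambda_0 (indices taken mod 2) *)
Definition alpha (j : nat) : weight :=
  if ~~ odd j then ((2, -2), 1) else ((-2, 2), 0).

Definition pairing (j : nat) (x : weight) : rat :=
  if ~~ odd j then x.1.1 else x.1.2.

Definition sref (j : nat) (x : weight) : weight :=
  wadd x (wscale (- pairing j x) (alpha j)).

(* action of w_k = s_{k-1} ... s_1 s_0 : w_0 = 1, w_{k+1} = s_k w_k *)
Fixpoint wact (k : nat) (x : weight) : weight :=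
  match k with
  | 0%N => x
  | k'.+1 => sref k' (wact k' x)
  end.

Definition dominant (x : weight) : Prop :=
  0 <= pairing 0 x /\ 0 <= pairing 1 x.

Definition is_int (q : rat) : Prop := exists z : int, q = z%:~R.

(* A path of shape Lambda_0 is represented as (dirs, times), where
   dirs = [:: k_1; ...; k_r] encodes sigma_j = w_{k_j} (the minimal coset
   representatives of W / W_{Lambda_0}), and
   times = [:: a_0; a_1; ...; a_r] with a_0 = 0, a_r = 1. *)
Definition path := (seq nat * seq rat)%type.

(* a-chain for (w_k, w_j), k > j: the unique maximal chain in W/W_{Lambda_0}
   is w_k > w_{k-1} > ... > w_j, with w_{t+1} = s_{alpha_{t mod 2}} w_t, and
   the Littelmann condition is a * <w_t Lambda_0, alpha_{t mod 2}^vee> in Z. *)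
Definition a_chain (a : rat) (k j : nat) : Prop :=
  (j < k)%N /\
  forall t : nat, (j <= t)%N -> (t < k)%N -> is_int (a * pairing t (wact t Lam0)).

Definition is_LS (p : path) : Prop :=
  let: (ds, ts) := p in
  let r := size ds in
  (0 < r)%N /\ size ts = r.+1 /\ nth 0 ts 0 = 0 /\ nth 0 ts r = 1 /\
      sorted gtn ds /\ sorted (fun x y : rat => x < y) ts /\
      forall j : nat, (1 <= j)%N -> (j < r)%N ->
        a_chain (nth 0 ts j) (nth 0%N ds j.-1) (nth 0%N ds j).

Definition turning (p : path) (j : nat) : weight :=
  let: (ds, ts) := p in
  foldr wadd wzero
    [seq wscale (nth 0 ts k - nth 0 ts k.-1) (wact (nth 0%N ds k.-1) Lam0)
    | k <- iota 1 j].

Definition lam_dominant (lam : weight) (p : path) : Prop :=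
  forall j : nat, (j <= size p.1)%N -> dominant (wadd lam (turning p j)).

Definition init_dir (p : path) : nat := nth 0%N p.1 0.

Definition P_set (i m : nat) (p : path) : Prop :=
  is_LS p /\ lam_dominant (Lam i) p /\ (init_dir p <= m)%N.

Definition isY0 (b : seq nat) : bool := sorted gtn b && all (fun x => 0 < x)%N b.

Definition btilde (b : seq nat) : seq nat :=
  let n := size b in [seq (nth 0%N b k - (n - k))%N | k <- iota 0 n].

(* i_j = (j - n)-th part of the conjugate of btilde, for n < j <= m *)
Definition iconj (b : seq nat) (j : nat) : nat :=
  count (fun x => (j - size b <= x)%N) (btilde b).

Definition Psi (b : seq nat) : path :=
  match b with
  | [::] => ([:: 0%N], [:: 0; 1])
  | mu1 :: _ =>
    let m := mu1 in let n := size b in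
    ([seq (m - t)%N | t <- iota 0 (m - n).+1],
     0 :: [seq ((iconj b (m - t))%:R / (m - t)%:R : rat) | t <- iota 0 (m - n)]
       ++ [:: 1])
  end.

(* Write [b = (mu_1 > ... > mu_n)] and [g_k = mu_k + k - 1]; strictness makes the
   shifted parts [g_k] weakly decreasing, and the conjugate of [btilde b] is
   [L(d) = #{k | g_k >= d}].  Hence [Psi b] runs in direction [w_d] up to time
   [L(d)/d]; these times decrease in [d], and [L(d)/d] times the relevant coroot
   pairing [d] is the integer [L(d)], so [Psi b] is an LS path.  As [w_t Lambda_0]
   is [(t+1) Lambda_0 - t Lambda_1] or [-t Lambda_0 + (t+1) Lambda_1] according to
   the parity of [t], the turning point at time [L(d)/d] has [Lambda_0]-coordinate
   [2 N(d) - L(d)] for odd [d] and [L(d) + L(d)/d - 2 N(d)] for even [d], where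
   [N(d)] counts the [k] with [g_k >= d] and [g_k] of parity opposite to [d].  So
   [Lambda_i]-dominance says that [2 N(d)] and [L(d)] differ by at most one, in a
   direction fixed by the parities of [d] and [i].  The [k] with [g_k >= d] form an
   initial segment; if all parts have the parity of [i + 1], the parity of [g_k]
   alternates along it, which gives exactly these bounds, and if [mu_k] is the first
   part of the other parity, the bound fails at [d = g_k]. *)

From Pilot Require Import Defs.
From mathcomp Require Import all_boot all_order all_algebra.
From mathcomp Require Import zify ring lra.
Set Implicit Arguments. Unset Strict Implicit. Unset Printing Implicit Defensive.
Import GRing.Theory Num.Theory.

Lemma count_iota_downclosed (P : pred nat) n :
  (forall i j, i <= j -> j < n -> P j -> P i) ->
  forall k, k < n -> P k = (k < count P (iota 0 n)).
Proof.
elim: n => [|n IH] Pdown k ltkn //.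
rewrite -[n.+1]addn1 iotaD count_cat /= addn0 add0n.
have IH' := IH (fun i j leij ltjn => Pdown i j leij (ltnW ltjn)).
have count_le : count P (iota 0 n) <= n by rewrite -[n in _ <= n](size_iota 0) count_size.
case Pn: (P n); last first.
  rewrite addn0; have [ltkn'|lenk] := ltnP k n; first exact: IH'.
  have -> : k = n by lia.
  by rewrite Pn ltnNge count_le.
have -> : count P (iota 0 n) = n.
  rewrite -[RHS](size_iota 0) -count_predT; apply: eq_in_count => j.
  by rewrite mem_iota add0n => /andP[_ ltjn]; apply: Pdown Pn; lia.
by rewrite addn1 ltkn; apply: Pdown Pn; lia.
Qed.

Lemma count_odd_addb_iota (r : bool) c :
  count (fun k => odd k (+) r) (iota 0 c) = (c + r) %/ 2.
Proof.
elim: c => [|c IH]; first by case: r.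
rewrite -addn1 iotaD count_cat IH /= add0n addn0.
by move: IH; have := modn2 c; case: (odd c); case: r => /=; lia.
Qed.

(* For [b = (mu_1 > ... > mu_n)], [shifted b k] is [mu_(k+1) + k]; the
   conjugate of [btilde b] counts the shifted parts above a given level. *)
Definition shifted (b : seq nat) (k : nat) : nat := nth 0 b k + k.

Definition nabove (b : seq nat) (d : nat) : nat :=
  count (fun k => d <= shifted b k) (iota 0 (size b)).

Definition nabove_opp (b : seq nat) (d : nat) : nat :=
  count (fun k => (d <= shifted b k) && (odd (shifted b k) != odd d))
        (iota 0 (size b)).

Definition parity_bounded (b : seq nat) (q : bool) (d : nat) : bool :=
  (nabove b d <= 2 * nabove_opp b d + (odd d == q)) &&
  (2 * nabove_opp b d <= nabove b d + (odd d != q)).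

Lemma nabove_le_size b d : nabove b d <= size b.
Proof. by rewrite -[X in _ <= X](size_iota 0) count_size. Qed.

Lemma naboveS_le b d : nabove b d.+1 <= nabove b d.
Proof. by apply: sub_count => k; apply: ltnW. Qed.

Lemma nabove_opp_le b d : nabove_opp b d <= nabove b d.
Proof. by apply: sub_count => k /andP[]. Qed.

Lemma nabove_oppS b d : nabove_opp b d + nabove_opp b d.+1 = nabove b d.+1.
Proof.
rewrite -[RHS]addn0 -(count_pred0 (iota 0 (size b))) -count_predUI.
congr (_ + _); apply: eq_count => k /=; set g := shifted b k.
  by have [ltdg|ltgd|<-] := ltngtP d g; rewrite ?eqxx ?leqnn ?ltnW //=;
    case: (odd g); case: (odd d).
by case: (odd g); case: (odd d); rewrite ?andbF //= -andbA andbN.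
Qed.

Section StrictPartition.

Variable b : seq nat.
Hypothesis Yb : isY0 b.

Lemma strict_nth_gap i j : i <= j -> j < size b ->
  nth 0 b j + (j - i) <= nth 0 b i.
Proof.
case/andP: Yb => sorted_b _ leij.
elim: j leij => [|j IH] leij ltjb; first by rewrite (_ : i = 0) //; lia.
have [->|neij] := eqVneq i j.+1; first by rewrite subnn addn0.
have lt_nth : nth 0 b j.+1 < nth 0 b j.
  have gtn_trans : transitive gtn by move=> ? ? ? /=; lia.
  by apply: (sorted_ltn_nth gtn_trans 0 sorted_b); rewrite ?inE //; lia.
by have := IH (ltac:(lia)) (ltnW ltjb); lia.
Qed.

Lemma shifted_nonincr i j : i <= j -> j < size b -> shifted b j <= shifted b i.
Proof. by move=> leij ltjb; have := strict_nth_gap leij ltjb; rewrite /shifted; lia. Qed.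

Lemma size_le_shifted k : k < size b -> size b <= shifted b k.
Proof.
move=> ltkb; have ltlast : (size b).-1 < size b by lia.
have := strict_nth_gap (_ : k <= (size b).-1) ltlast.
have : 0 < nth 0 b (size b).-1 by case/andP: Yb => _ /allP; apply; apply: mem_nth.
by rewrite /shifted => pos /(_ ltac:(lia)); lia.
Qed.

Lemma shifted_ge_nabove d k : k < size b ->
  (d <= shifted b k) = (k < nabove b d).
Proof.
apply: count_iota_downclosed => i j leij ltjb /= ledj.
exact: leq_trans ledj (shifted_nonincr leij ltjb).
Qed.

Lemma nabove_size : nabove b (size b) = size b.
Proof.
rewrite /nabove (@eq_in_count _ _ predT) ?count_predT ?size_iota // => k.
by rewrite mem_iota add0n => /andP[_]; apply: size_le_shifted.
Qed.

Lemma iconj_nabove d : size b < d -> iconj b d = nabove b d.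
Proof.
move=> ltbd; rewrite /iconj /btilde count_map /nabove; apply: eq_in_count => k.
rewrite mem_iota add0n => /andP[_ ltkb] /=.
by have := size_le_shifted ltkb; rewrite /shifted; lia.
Qed.

Lemma nabove_oppE d : nabove_opp b d =
  count (fun k => odd (shifted b k) != odd d) (iota 0 (nabove b d)).
Proof.
have le_size := nabove_le_size b d.
rewrite /nabove_opp -(subnKC le_size) iotaD count_cat add0n.
rewrite (@eq_in_count _ _ pred0 (iota (nabove b d) _)); last first.
  move=> k; rewrite mem_iota subnKC // => /andP[leLk ltkb].
  by rewrite shifted_ge_nabove // ltnNge leLk.
rewrite count_pred0 addn0; apply: eq_in_count => k.
rewrite mem_iota add0n => /andP[_ ltkL].
by rewrite shifted_ge_nabove ?ltkL //; lia.
Qed.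

(* The indices with [shifted b k >= d] form a prefix along which the parity of
   [shifted b k] alternates when all parts have the same parity. *)
Lemma parity_bounded_all q d : all (fun x => odd x == q) b -> parity_bounded b q d.
Proof.
move=> /all_nthP par_b; rewrite /parity_bounded.
have -> : nabove_opp b d = count (fun k => odd k (+) (q (+) odd d))
                                  (iota 0 (nabove b d)).
  rewrite nabove_oppE; apply: eq_in_count => k.
  rewrite mem_iota add0n => /andP[_ ltkL].
  have /eqP : odd (nth 0 b k) == q by apply: par_b; have := nabove_le_size b d; lia.
  by rewrite /shifted oddD => ->; case: (odd k); case: (odd d); case: (q).
rewrite count_odd_addb_iota.
by case: (q); case: (odd d) => /=; apply/andP; split; lia.
Qed.

Lemma parity_unbounded q : ~~ all (fun x => odd x == q) b ->
  exists2 k, k < size b &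
    2 * nabove_opp b (shifted b k) + (odd (shifted b k) == q) < nabove b (shifted b k).
Proof.
rewrite -has_predC => has_bad.
set k := find (predC (fun x => odd x == q)) b.
have ltkb : k < size b by rewrite -has_find.
have /negbTE bad_k := nth_find 0 has_bad.
have good_before j : j < k -> odd (nth 0 b j) = q.
  by move=> ltjk; apply/eqP/negbFE/(before_find 0 ltjk).
exists k => //; set d := shifted b k.
have ltkL : k < nabove b d by rewrite -shifted_ge_nabove.
have -> : nabove_opp b d = count (fun j => odd j (+) (q (+) odd d)) (iota 0 k).
  rewrite nabove_oppE -(subnKC (ltnW ltkL)) iotaD count_cat add0n.
  rewrite (@eq_in_count _ _ pred0 (iota k _)); last first.
    move=> j; rewrite mem_iota subnKC ?(ltnW ltkL) // => /andP[lekj ltjL].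
    have ltjb : j < size b by have := nabove_le_size b d; lia.
    have := shifted_nonincr lekj ltjb; rewrite -/d.
    rewrite -(shifted_ge_nabove d ltjb) in ltjL => le_d.
    have -> : shifted b j = d by apply/eqP; rewrite eqn_leq le_d ltjL.
    by rewrite eqxx.
  rewrite count_pred0 addn0; apply: eq_in_count => j.
  rewrite mem_iota add0n => /andP[_ ltjk].
  by rewrite /shifted oddD good_before //; case: (odd j); case: (odd d); case: (q).
have odd_d : odd d = ~~ q (+) odd k.
  by rewrite /d /shifted oddD; move: bad_k; case: (odd _); case: (q).
rewrite count_odd_addb_iota odd_d; move: ltkL; rewrite -/d.
by have := modn2 k; case: (odd k); case: (q) => /=; lia.
Qed.

End StrictPartition.

Local Open Scope ring_scope.

Lemma wact_Lam0 t : (wact t Lam0).1 =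
  if odd t then (- t%:R, t.+1%:R) else (t.+1%:R, - t%:R) :> rat * rat.
Proof.
elim: t => [|t IH] //=; rewrite /sref /wadd /wscale /pairing /alpha /=.
case: (wact t Lam0) IH => [[c0 c1] e] /=.
by case: (odd t) => /= [][-> ->] /=; congr (_, _); rewrite -!natr1; ring.
Qed.

Lemma pairing_wact_Lam0 t : pairing t (wact t Lam0) = t.+1%:R.
Proof.
by have := wact_Lam0 t; rewrite /pairing; case: (odd t) => /= ->.
Qed.

Lemma wact_Lam0_level t : (wact t Lam0).1.1 + (wact t Lam0).1.2 = 1.
Proof. by rewrite wact_Lam0; case: (odd t) => /=; rewrite -natr1; ring. Qed.

Lemma foldr_wadd_rcons (s : seq weight) (y : weight) :
  foldr wadd wzero (rcons s y) = wadd (foldr wadd wzero s) y.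
Proof.
elim: s => [|x s IH] /=; last rewrite IH.
  by case: y => [[a c] e]; rewrite /wadd /=; congr (_, _, _); ring.
by rewrite /wadd /=; congr (_, _, _); ring.
Qed.

Lemma turningS (p : Defs.path) j : turning p j.+1 =
  wadd (turning p j)
       (wscale (nth 0 p.2 j.+1 - nth 0 p.2 j) (wact (nth 0%N p.1 j) Lam0)).
Proof.
case: p => ds ts; rewrite /turning -[j.+1]addn1 iotaD cats1 map_rcons.
by rewrite foldr_wadd_rcons /= add1n addn1.
Qed.

Lemma dominant_LamE i (t : weight) : (i < 2)%N ->
  dominant (wadd (Lam i) t) <->
  0 <= (i == 0%N)%:R + t.1.1 /\ 0 <= (i != 0%N)%:R + t.1.2.
Proof. by case: i => [|[|]] //= _; rewrite /dominant /pairing /= ?add0r. Qed.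

Definition time (b : seq nat) (d : nat) : rat := (nabove b d)%:R / d%:R.

(* [time b d] is the time at which [Psi b] leaves the direction [w_d], and
   [turn0 b d] the [Lambda_0]-coordinate of the turning point there. *)
Definition turn0 (b : seq nat) (d : nat) : rat :=
  if odd d then 2 * (nabove_opp b d)%:R - (nabove b d)%:R
  else (nabove b d)%:R + time b d - 2 * (nabove_opp b d)%:R.

Lemma turn0_rec b d : (0 < d)%N ->
  turn0 b d = turn0 b d.+1 + (time b d - time b d.+1) * (wact d Lam0).1.1.
Proof.
move=> d_gt0; have rec := nabove_oppS b d.
rewrite wact_Lam0 /turn0 /time /=.
have d0 : (d%:R : rat) != 0 by rewrite pnatr_eq0 -lt0n.
have d1 : (d%:R + 1 : rat) != 0 by rewrite natr1 pnatr_eq0.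
move: (nabove_opp b d) (nabove_opp b d.+1) (nabove b d) (nabove b d.+1) rec.
move=> N0 N1 L0 L1 /(congr1 (fun n => n%:R : rat)); rewrite natrD => rec.
by case: (odd d) => /=; rewrite -rec -(@natr1 rat d); field; rewrite ?d0 ?d1.
Qed.

Lemma turn0_dominant b (q : bool) d : (0 < d)%N -> parity_bounded b q d ->
  0 <= q%:R + turn0 b d /\ 0 <= (~~ q)%:R + (time b d - turn0 b d).
Proof.
move=> d_gt0 /andP[]; rewrite /turn0.
have : 0 <= time b d by rewrite /time divr_ge0 ?ler0n.
move: (time b d) (nabove b d) (nabove_opp b d) => y L N y_ge0.
rewrite -!(ler_nat rat) !natrD.
by case: (odd d); case: q => /= lower upper; split; lra.
Qed.

Lemma turn0_dominant_lower b (q : bool) d :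
  0 <= q%:R + turn0 b d -> 0 <= (~~ q)%:R + (time b d - turn0 b d) ->
  (nabove b d <= 2 * nabove_opp b d + (odd d == q))%N.
Proof.
rewrite /turn0; move: (time b d) (nabove b d) (nabove_opp b d) => y L N.
rewrite -(ler_nat rat) natrD.
by case: (odd d); case: q => /= c0_ge0 c1_ge0; lra.
Qed.

Section PsiCons.

Variables (x : nat) (s : seq nat).
Hypothesis Yb : isY0 (x :: s).
Local Notation b := (x :: s).

Lemma size_le_head : (size b <= x)%N.
Proof. by have := size_le_shifted Yb (ltn0Sn (size s)); rewrite /shifted addn0. Qed.

Lemma nabove_gt_head : nabove b x.+1 = 0%N.
Proof.
rewrite /nabove (@eq_in_count _ _ pred0) ?count_pred0 // => k.
rewrite mem_iota add0n => /andP[_ ltkb] /=.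
apply/negbTE; rewrite -ltnNge ltnS.
by have := shifted_nonincr Yb (leq0n k) ltkb; rewrite /shifted addn0.
Qed.

Lemma nabove_pos d : (d <= x)%N -> (0 < nabove b d)%N.
Proof.
move=> ledx; rewrite /nabove -has_count; apply/hasP; exists 0%N.
  by rewrite mem_iota.
by rewrite /shifted addn0.
Qed.

Lemma time_gt_head : time b x.+1 = 0.
Proof. by rewrite /time nabove_gt_head mul0r. Qed.

Lemma time_size : time b (size b) = 1.
Proof. by rewrite /time nabove_size // divff // pnatr_eq0. Qed.

Lemma time_decr d : (0 < d <= x)%N -> time b d.+1 < time b d.
Proof.
case/andP=> d_gt0 ledx; rewrite /time.
have le_nabove := naboveS_le b d; have nabove_gt0 := nabove_pos ledx.
rewrite ltr_pdivrMr ?ltr0n // mulrAC ltr_pdivlMr ?ltr0n // -!natrM ltr_nat; nia.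
Qed.

Lemma size_Psi_dirs : size (Psi b).1 = (x - size b).+1.
Proof. by rewrite size_map size_iota. Qed.

Lemma nth_Psi_dirs k : (k <= x - size b)%N -> nth 0%N (Psi b).1 k = (x - k)%N.
Proof. by move=> lek; rewrite (nth_map 0%N) ?nth_iota ?size_iota. Qed.

Lemma nth_Psi_times j : (j <= (x - size b).+1)%N ->
  nth 0 (Psi b).2 j = time b (x.+1 - j).
Proof.
(* [size_b] tells [lia] how the atom [size b] relates to the [size s] of [/=]. *)
move=> lej; have le_bx := size_le_head; have size_b : size b = (size s).+1 by [].
case: j lej => [|j] lej /=; first by rewrite subn0 time_gt_head.
rewrite nth_cat size_map size_iota subSS; case: ltnP => ltj.
  by rewrite (nth_map 0%N) ?size_iota // nth_iota // add0n iconj_nabove //=; lia.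
have -> : j = (x - size b)%N by lia.
by rewrite subnn /= (_ : x - (x - size b) = size b)%N ?time_size //; lia.
Qed.

Lemma is_LS_Psi : is_LS (Psi b).
Proof.
have le_bx := size_le_head.
have size_ts : size (Psi b).2 = (x - size b).+2.
  by rewrite /= size_cat size_map size_iota addn1.
move: size_ts nth_Psi_times nth_Psi_dirs size_Psi_dirs.
rewrite /is_LS; case: (Psi b) => ds ts /= size_ts nth_ts nth_ds size_ds.
rewrite size_ds; split=> //; split; first by rewrite size_ts.
have size_b : size b = (size s).+1 by [].
split; first by rewrite nth_ts // subn0 time_gt_head.
split; first by rewrite nth_ts // (_ : x.+1 - _ = size b)%N ?time_size //; lia.
split; first by apply/(sortedP 0%N) => k; rewrite size_ds => ltk; rewrite !nth_ds /=; lia.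
split.
  apply/(sortedP 0) => k; rewrite size_ts => ltk; rewrite !nth_ts; [|lia|lia].
  by rewrite (_ : x.+1 - k = (x - k).+1)%N ?subSS; [apply: time_decr; lia | lia].
move=> j j_ge1 ltj; rewrite !nth_ds; [|lia|lia]; split; first lia.
move=> t le_t lt_t; have -> : t = (x - j)%N by lia.
rewrite pairing_wact_Lam0 nth_ts; last lia.
rewrite /time (_ : x.+1 - j = (x - j).+1)%N; last lia.
by rewrite divfK ?pnatr_eq0 //; exists (nabove b (x - j).+1)%:Z.
Qed.

Lemma turning_Psi j : (j <= (x - size b).+1)%N ->
  (turning (Psi b) j).1 =
  (turn0 b (x.+1 - j), time b (x.+1 - j) - turn0 b (x.+1 - j)).
Proof.
have le_bx := size_le_head; have size_b : size b = (size s).+1 by [].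
elim: j => [|j IH] lej.
  have N0 : nabove_opp b x.+1 = 0%N.
    by apply/eqP; rewrite -leqn0 -nabove_gt_head nabove_opp_le.
  rewrite subn0 time_gt_head /turn0 /time N0 nabove_gt_head.
  by case: (odd _); congr (_, _); rewrite /= ?mul0r; ring.
rewrite turningS (nth_Psi_times lej) (nth_Psi_times (ltnW lej)) nth_Psi_dirs; last lia.
rewrite /wadd /wscale /= IH; last lia.
rewrite subSS (_ : x.+1 - j = (x - j).+1)%N; last lia.
set d := (x - j)%N; rewrite (@turn0_rec b d); last lia.
have level := wact_Lam0_level d.
congr (_, _); rewrite /= -[(wact d Lam0).1.2](addKr (wact d Lam0).1.1) level; ring.
Qed.

Lemma lam_dominant_Psi i : (i < 2)%N ->
  lam_dominant (Lam i) (Psi b) <-> all (fun y => odd y == (i == 0%N)) b.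
Proof.
move=> lti2; rewrite /lam_dominant size_Psi_dirs; set q := (i == 0%N).
have le_bx := size_le_head; have size_b : size b = (size s).+1 by [].
have dominant_at j : (j <= (x - size b).+1)%N ->
    dominant (wadd (Lam i) (turning (Psi b) j)) <->
    0 <= q%:R + turn0 b (x.+1 - j) /\
    0 <= (~~ q)%:R + (time b (x.+1 - j) - turn0 b (x.+1 - j)).
  move=> lej; have := turning_Psi lej.
  by case: (turning _ _) => [[c0 c1] e] /= [-> ->]; apply: dominant_LamE.
split=> [dom | par_b j lej]; last first.
  apply/(dominant_at _ lej)/turn0_dominant; first lia.
  exact: parity_bounded_all.
apply/negPn/negP => /(parity_unbounded Yb) [k ltkb].
set d := shifted b k => lower_fails.
have le_bd : (size b <= d)%N := size_le_shifted Yb ltkb.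
have le_dx : (d <= x)%N.
  by have := shifted_nonincr Yb (leq0n k) ltkb; rewrite /shifted addn0.
have lej : (x.+1 - d <= (x - size b).+1)%N by lia.
have /(dominant_at _ lej) [] := dom _ lej.
rewrite (_ : x.+1 - (x.+1 - d) = d)%N; last lia.
by move=> c0_ge0 c1_ge0; have := turn0_dominant_lower c0_ge0 c1_ge0; lia.
Qed.

End PsiCons.

Lemma P_set_Psi_nil i m : (i < 2)%N -> P_set i m (Psi [::]).
Proof.
move=> lti2; split; first by do 6!split => //; case=> [|[|]].
split=> // j lej; apply/dominant_LamE => //.
case: j lej => [|[|]] //= _; case: i lti2 => [|[|]] //= _;
  rewrite /turning /= /wadd /wscale /=; split; lra.
Qed.

Theorem mainTheorem4 (i m : nat) (b : seq nat) :
  (i < 2)%N -> isY0 b ->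
  (P_set i m (Psi b) <->
   (all (fun x => odd x == (i == 0%N)) b && (head 0%N b <= m)%N)).
Proof.
move=> lti2; case: b => [|x s] Yb.
  by rewrite /= leq0n; split=> // _; apply: P_set_Psi_nil.
rewrite /P_set /init_dir nth_Psi_dirs // subn0.
split; first by case=> _ [/(lam_dominant_Psi Yb lti2) -> ?].
by case/andP=> /(lam_dominant_Psi Yb lti2) dom lexm; split; [apply: is_LS_Psi|].
Qed.
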